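(* Let a General Utility Markov Game (see context) satisfy (A1) for every $i$ and every $\pi_{-i}\in\Pi_{-i}$, $(\lambda_1,\dots,\lambda_N)\mapsto F_i(\lambda_1,\dots,\lambda_N,\pi_{-i})$ is jointly concave, and (A2) $d_\mu^\pi(s)>0$ for all $\pi\in\Pi$, $s\in\mathcal S$. Let $v(\pi)=(\nabla_{\pi_i}u_{\mu,i}(\pi))_{i\in\mathcal N}$. Then $\pi^\star\in\Pi$ is a Nash equilibrium if and only if $\pi^\star=\mathrm{Proj}_\Pi(\pi^\star+\eta\,v(\pi^\star))$ for all $\eta>0$, equivalently if and only if $\pi_i^\star=\mathrm{Proj}_{\Pi_i}(\pi_i^\star+\eta\,\nabla_{\pi_i}u_{\mu,i}(\pi^\star))$ for all $i\in\mathcal N$ and all $\eta>0$, where $\mathrm{Proj}$ denotes Euclidean projection.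
   Context: A GUMG consists of: agents $\mathcal N=\{1,\dots,N\}$; finite state space $\mathcal S$; finite action sets $\mathcal A_i$, joint $\mathcal A=\prod_i\mathcal A_i$; transition kernel $P:\mathcal S\times\mathcal A\to\Delta(\mathcal S)$; initial distribution $\mu$; discount $\gamma\in(0,1)$; differentiable $F_i:\Lambda\times\Pi_{-i}\to\mathbb R$, $\Lambda=\prod_i\Delta(\mathcal S\times\mathcal A_i)$. Policies $\Pi_i=\Delta(\mathcal A_i)^{\mathcal S}$ as vectors $(\pi_i(a_i|s))$ in Euclidean space; $\Pi=\prod_i\Pi_i$; $\pi(a|s)=\prod_i\pi_i(a_i|s)$. With $\mathbb P_{\mu,\pi}$ the law of the induced chain ($s_0\sim\mu$): $d_\mu^\pi(s)=(1-\gamma)\sum_t\gamma^t\mathbb P_{\mu,\pi}(s_t=s)$, $\lambda_{\mu,i}^\pi(s,a_i)=(1-\gamma)\sum_t\gamma^t\mathbb P_{\mu,\pi}(s_t=s,a_{i,t}=a_i)$. Utilities $u_{\mu,i}(\pi)=F_i(\lambda_{\mu,1}^\pi,\dots,\lambda_{\mu,N}^\pi,\pi_{-i})$; $\nabla_{\pi_i}$ is the gradient w.r.t. coordinates $\pi_i(a_i|s)$. $\pi^\star$ is a Nash equilibrium if $u_{\mu,i}(\pi_i',\pi^\star_{-i})\le u_{\mu,i}(\pi^\star)$ for all $i$ and $\pi_i'\in\Pi_i$. *)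

From HB Require Import structures.
From mathcomp Require Import all_boot all_order all_algebra.
From mathcomp Require Import all_classical all_reals all_analysis.
From Stdlib Require Import ClassicalEpsilon.
Set Implicit Arguments. Unset Strict Implicit. Unset Printing Implicit Defensive.
Import Order.TTheory GRing.Theory Num.Theory.
Local Open Scope ring_scope.

Section Generic.
Variable R : realType.
Variable I : finType.

Definition sqdist (x y : I -> R) : R := \sum_(k : I) (x k - y k) ^+ 2.

Definition Proj (C : (I -> R) -> Prop) (x : I -> R) : I -> R :=
  epsilon (inhabits (fun _ : I => 0 : R))
    (fun y => C y /\ forall z, C z -> sqdist x y <= sqdist x z).

Definition pderiv (f : (I -> R) -> R) (x : I -> R) (k : I) : R :=
  derive1 (fun t : R => f (fun k' => if k' == k then x k' + t else x k')) 0.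

Definition diffble (f : (I -> R) -> R) (x : I -> R) : Prop :=
  exists g : I -> R, forall e : R, 0 < e -> exists d : R, 0 < d /\
    forall h : I -> R, (forall k, `|h k| <= d) ->
      `|f (fun k => x k + h k) - f x - \sum_(k : I) g k * h k|
        <= e * \sum_(k : I) `|h k|.
End Generic.

Definition tsum (R : realType) (f : nat -> R) : R :=
  limn (fun n => \sum_(0 <= t < n) f t).

Section Index.
Variables (N : nat) (S : finType) (A : 'I_N -> finType).

Definition jact := {dffun forall i : 'I_N, A i}.
(* coordinates (i, s, a_i) of a policy profile pi (entries pi_i(a_i|s)),
   and equally of an occupancy-measure profile lambda (entries lambda_i(s,a_i)) *)
Definition pcoord := {i : 'I_N & (S * A i)%type}.
Definition mkc (i : 'I_N) (x : (S * A i)%type) : pcoord :=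
  Tagged (fun j => (S * A j)%type) x.
Definition pcoord_mi (i : 'I_N) := {k : pcoord | tag k != i}.
End Index.

Section GUMG.
Variable R : realType.
Variables (N : nat) (S : finType) (A : 'I_N -> finType).
Variable P : S -> jact A -> S -> R.      (* P(s'|s,a) = P s a s' *)
Variable mu : S -> R.
Variable gamma : R.

Local Unset Implicit Arguments.
Definition restr (pi : pcoord S A -> R) (i : 'I_N) : (S * A i)%type -> R :=
  fun x => pi (mkc x).
Definition pminus (i : 'I_N) (pi : pcoord S A -> R) : pcoord_mi S A i -> R :=
  fun k => pi (val k).

Definition inPi_i (i : 'I_N) (p : (S * A i)%type -> R) : Prop :=
  forall s : S, (forall a : A i, 0 <= p (s, a)) /\ \sum_(a : A i) p (s, a) = 1.
Definition inPi (pi : pcoord S A -> R) : Prop := forall i, inPi_i i (restr pi i).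

Definition inLam (l : pcoord S A -> R) : Prop :=
  forall i : 'I_N, (forall x : (S * A i)%type, 0 <= l (mkc x)) /\
                   \sum_(x : (S * A i)%type) l (mkc x) = 1.

Definition jpol (pi : pcoord S A -> R) (s : S) (a : jact A) : R :=
  \prod_(i : 'I_N) pi (mkc (s, a i)).
Definition cstep (pi : pcoord S A -> R) (p : S -> R) : S -> R :=
  fun s' => \sum_(s : S) p s * \sum_(a : jact A) jpol pi s a * P s a s'.
Definition stlaw (pi : pcoord S A -> R) (t : nat) : S -> R := iter t (cstep pi) mu.

Definition dmu (pi : pcoord S A -> R) (s : S) : R :=
  (1 - gamma) * tsum (fun t => gamma ^+ t * stlaw pi t s).
(* lambda_{mu,i}^pi(s,a_i) at coordinate k = (i,s,a_i);
   P_{mu,pi}(s_t = s, a_{i,t} = a_i) = P_{mu,pi}(s_t = s) * pi_i(a_i|s) *)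
Definition lam (pi : pcoord S A -> R) (k : pcoord S A) : R :=
  (1 - gamma) * tsum (fun t => gamma ^+ t * (stlaw pi t (tagged k).1 * pi k)).

Variable F : forall i : 'I_N, (pcoord S A -> R) -> (pcoord_mi S A i -> R) -> R.

Definition util (i : 'I_N) (pi : pcoord S A -> R) : R := F i (lam pi) (pminus i pi).

Definition grad_i (i : 'I_N) (pi : pcoord S A -> R) : (S * A i)%type -> R :=
  fun x => pderiv (util i) pi (mkc x).
Definition vfield (pi : pcoord S A -> R) : pcoord S A -> R :=
  fun k => pderiv (util (tag k)) pi k.

(* Nash equilibrium; (pi_i', pi*_{-i}) ranges over the profiles in Pi
   agreeing with pi* off agent i *)
Definition Nash (pistar : pcoord S A -> R) : Prop :=
  inPi pistar /\
  forall (i : 'I_N) (pi' : pcoord S A -> R), inPi pi' ->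
    (forall k : pcoord S A, tag k != i -> pi' k = pistar k) ->
    util i pi' <= util i pistar.

Definition Fjoint (i : 'I_N) (z : (pcoord S A + pcoord_mi S A i)%type -> R) : R :=
  F i (fun k => z (inl k)) (fun k => z (inr k)).
Definition joinv (i : 'I_N) (l : pcoord S A -> R) (q : pcoord_mi S A i -> R)
  : (pcoord S A + pcoord_mi S A i)%type -> R :=
  fun z => match z with inl k => l k | inr k => q k end.
End GUMG.
Arguments restr {R N S A} pi i _.
Arguments pminus {R N S A} i pi _.
Arguments inPi_i {R N S A} i p.
Arguments inPi {R N S A} pi.
Arguments inLam {R N S A} l.
Arguments jpol {R N S A} pi s a.
Arguments cstep {R N S A} P pi p _.
Arguments stlaw {R N S A} P mu pi t _.
Arguments dmu {R N S A} P mu gamma pi s.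
Arguments lam {R N S A} P mu gamma pi k.
Arguments util {R N S A} P mu gamma F i pi.
Arguments grad_i {R N S A} P mu gamma F i pi _.
Arguments vfield {R N S A} P mu gamma F pi _.
Arguments Nash {R N S A} P mu gamma F pistar.
Arguments Fjoint {R N S A} F i z.
Arguments joinv {R N S A} i l q _.

From HB Require Import structures.
From mathcomp Require Import all_boot all_order all_algebra.
From mathcomp Require Import all_classical all_reals all_analysis.
From Stdlib Require Import ClassicalEpsilon.
From mathcomp Require Import ring lra.
Import Order.TTheory GRing.Theory Num.Theory numFieldNormedType.Exports.
Local Open Scope ring_scope.
Set Implicit Arguments. Unset Strict Implicit. Unset Printing Implicit Defensive.

(* At a profile p of Pi, the condition p = Proj(p + eta v(p)) is equivalent to the
   variational inequality <v(p), q - p> <= 0 for all q in Pi: this is the obtuse-angle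
   characterisation of the projection onto a convex set, and Pi is a product of
   simplices, onto which projections exist by water-filling. As Pi is a product, the
   inequality splits into one inequality per agent, which also gives the per-agent form.
   It remains to show that p_i is a best response to p_{-i} exactly when the agent-i
   inequality holds.
   Necessity is the first-order condition at a maximum. It needs u_i to be Frechet
   differentiable in p_i, which follows from the chain rule: the discounted occupancy
   solves a linear fixpoint equation whose kernel is affine in p_i, so it has a
   first-order expansion in p_i with quadratic remainder.
   Sufficiency is hidden concavity. For a deviation q of agent i, the mixture
   (1 - t) lambda(p) + t lambda(q) is the occupancy measure of a deviation p_t, well
   defined as d_mu > 0 by (A2), with |p_t - p| = O(t). Concavity (A1) gives
   u_i(p_t) >= (1 - t) u_i(p) + t u_i(q); expanding u_i(p_t) to first order at p, where
   the inequality makes the linear term nonpositive, and letting t -> 0 yields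
   u_i(q) <= u_i(p). *)

Section Norm1.
Variables (R : realType) (T : finType).
Implicit Types v : T -> R.

Definition norm1 v : R := \sum_k `|v k|.

Lemma norm1_ge0 v : 0 <= norm1 v.
Proof. by apply: sumr_ge0 => k _; exact: normr_ge0. Qed.

Lemma ler_norm1 v k : `|v k| <= norm1 v.
Proof.
by rewrite /norm1 (bigD1 k) //= lerDl; apply: sumr_ge0 => *; exact: normr_ge0.
Qed.

Lemma norm1_scale (c : R) v : norm1 (fun k => c * v k) = `|c| * norm1 v.
Proof. by rewrite /norm1 mulr_sumr; apply: eq_bigr => k _; rewrite normrM. Qed.

Lemma norm1_le_card v (c : R) : (forall k, `|v k| <= c) -> norm1 v <= #|T|%:R * c.
Proof.
by move=> vc; apply: le_trans (ler_sum _ (fun k _ => vc k)) _; rewrite sumr_const mulr_natl.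
Qed.

Lemma norm1_le0 v : norm1 v <= 0 -> v = fun _ => 0.
Proof.
move=> v0; apply: funext => k; apply/eqP; rewrite -normr_le0.
exact: le_trans (ler_norm1 v k) v0.
Qed.

End Norm1.

Lemma sum_pair (R : nmodType) (T1 T2 : finType) (f : (T1 * T2)%type -> R) :
  \sum_x f x = \sum_s \sum_a f (s, a).
Proof. by rewrite pair_bigA; apply: eq_bigr => -[]. Qed.

Lemma sum_mul_indicator (R : pzSemiRingType) (T : finType) (h : T -> R) m :
  \sum_k h k * (m == k)%:R = h m.
Proof.
rewrite (bigD1 m) //= eqxx mulr1 big1 ?addr0 // => k km.
by rewrite eq_sym (negbTE km) mulr0.
Qed.

Lemma sum_dffun_prod (R : comNzRingType) (I : finType) (T : I -> finType)
    (f : forall i, T i -> R) :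
  \sum_(a : {dffun forall i, T i}) \prod_i f i (a i) = \prod_i \sum_(t : T i) f i t.
Proof.
pose F i := [ffun t : T i => f i t].
transitivity (\sum_(t : fprod T) \prod_(i in I) F i (t i)).
  rewrite (reindex (@dffun_of_fprod I T)); last first.
    by apply: onW_bij; exact: dffun_of_fprod_bij.
  by apply: eq_bigr => t _; apply: eq_bigr => i _; rewrite /F !ffunE.
rewrite (@big_fprod R 0 1 *%R +%R I T F).
rewrite [RHS](eq_bigr (fun i => \sum_(j in tagged_with T i) untag 0 (F i) j)); last first.
  move=> i _; rewrite -(@big_tag R 0 +%R I T (fun i t => F i t) i).
  by apply: eq_bigr => t _; rewrite /F ffunE.
by rewrite bigA_distr_big_dep; apply: eq_bigl.
Qed.

Section Projection.
Variables (R : realType) (I : finType).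
Implicit Types (x y z : I -> R) (C : (I -> R) -> Prop).

Definition proj_ineq C x y :=
  forall z, C z -> \sum_k (x k - y k) * (z k - y k) <= 0.

Definition convex_pred C :=
  forall y z (t : R), C y -> C z -> 0 <= t <= 1 -> C (fun k => y k + t * (z k - y k)).

Lemma sqdist_ge0 x y : 0 <= sqdist x y.
Proof. by apply: sumr_ge0 => k _; rewrite sqr_ge0. Qed.

Lemma sqdist_expand x y z :
  sqdist x z = sqdist x y - 2 * (\sum_k (x k - y k) * (z k - y k)) + sqdist y z.
Proof.
rewrite /sqdist mulr_sumr -sumrB -big_split /=.
by apply: eq_bigr => k _; rewrite !expr2; ring.
Qed.

Lemma proj_ineq_nearest C x y :
  proj_ineq C x y -> forall z, C z -> sqdist x y <= sqdist x z.
Proof.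
move=> xy z Cz; rewrite (sqdist_expand x y z).
by have := xy z Cz; have := sqdist_ge0 y z; lra.
Qed.

(* Moving from y towards z by t changes sqdist x _ by t^2 |z - y|^2 - 2 t <x - y, z - y>,
   which must stay nonnegative for all small t > 0. *)
Lemma nearest_proj_ineq C x y : convex_pred C -> C y ->
  (forall z, C z -> sqdist x y <= sqdist x z) -> proj_ineq C x y.
Proof.
move=> cC Cy ymin z Cz.
set c := \sum_k _; set Q := sqdist y z.
have Q0 : 0 <= Q by exact: sqdist_ge0.
have step t : 0 < t <= 1 -> 2 * c <= t * Q.
  case/andP=> t0 t1.
  have := ymin _ (cC y z t Cy Cz (andb_true_intro (conj (ltW t0) t1))).
  rewrite (sqdist_expand x y (fun k => y k + t * (z k - y k))).
  have -> : \sum_k (x k - y k) * (y k + t * (z k - y k) - y k) = t * c.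
    by rewrite /c mulr_sumr; apply: eq_bigr => k _; ring.
  have -> : sqdist y (fun k => y k + t * (z k - y k)) = t ^+ 2 * Q.
    by rewrite /Q /sqdist mulr_sumr; apply: eq_bigr => k _; rewrite !expr2; ring.
  rewrite expr2 => h.
  by rewrite -(ler_pM2l t0); nra.
rewrite leNgt; apply/negP => c0.
have cQ : 0 < c + Q by lra.
pose t := c / (c + Q).
have tcQ : t * (c + Q) = c by rewrite /t mulfVK // gt_eqF.
have t0 : 0 < t by rewrite /t divr_gt0.
have t1 : t <= 1 by rewrite /t ler_pdivrMr // mul1r; lra.
by have := step t (andb_true_intro (conj t0 t1)); nra.
Qed.

Lemma proj_ineq_uniq C x y y' :
  proj_ineq C x y -> proj_ineq C x y' -> C y -> C y' -> y = y'.
Proof.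
move=> xy xy' Cy Cy'.
have sq0 : \sum_k (y' k - y k) ^+ 2 = 0.
  apply/eqP; rewrite eq_le sumr_ge0 ?andbT => [|k _]; last by rewrite sqr_ge0.
  have -> : \sum_k (y' k - y k) ^+ 2 =
      \sum_k ((x k - y k) * (y' k - y k) + (x k - y' k) * (y k - y' k)).
    by apply: eq_bigr => k _; rewrite expr2; ring.
  by rewrite big_split /=; have := lerD (xy y' Cy') (xy' y Cy); rewrite addr0.
apply: funext => k; apply/eqP; rewrite eq_sym -subr_eq0 -sqrf_eq0.
by rewrite (psumr_eq0P (fun k _ => sqr_ge0 (y' k - y k)) sq0).
Qed.

Lemma Proj_eq C x y : convex_pred C -> (exists y0, C y0 /\ proj_ineq C x y0) -> C y ->
  (y = Proj C x <-> proj_ineq C x y).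
Proof.
move=> cC [y0 [Cy0 xy0]] Cy.
have [Cp pmin] := epsilon_spec (inhabits (fun _ : I => 0 : R))
  (fun p => C p /\ forall z, C z -> sqdist x p <= sqdist x z)
  (ex_intro _ y0 (conj Cy0 (proj_ineq_nearest xy0))).
have xp := nearest_proj_ineq cC Cp pmin.
by split=> [-> // | xy]; exact: proj_ineq_uniq xy xp Cy Cp.
Qed.

Lemma proj_ineq_step C y (v : I -> R) (eta : R) : 0 < eta ->
  proj_ineq C (fun k => y k + eta * v k) y <->
  forall z, C z -> \sum_k v k * (z k - y k) <= 0.
Proof.
move=> eta0.
have e z : \sum_k (y k + eta * v k - y k) * (z k - y k) = eta * \sum_k v k * (z k - y k).
  by rewrite mulr_sumr; apply: eq_bigr => k _; ring.
by split=> H z Cz; have := H z Cz; rewrite ?e pmulr_rle0.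
Qed.

End Projection.

Section FiberSimplex.
Variables (R : realType) (K B : finType) (b : K -> B).

Definition fiber_simplex (y : K -> R) :=
  (forall k, 0 <= y k) /\ forall c, \sum_(k | b k == c) y k = 1.

Lemma convex_fiber_simplex : convex_pred fiber_simplex.
Proof.
move=> y z t [y0 y1] [z0 z1] /andP[t0 t1]; split=> [k|c].
  have -> : y k + t * (z k - y k) = (1 - t) * y k + t * z k by ring.
  by have := y0 k; have := z0 k => *; apply: addr_ge0; apply: mulr_ge0 => //; lra.
by rewrite big_split /= -mulr_sumr sumrB y1 z1; ring.
Qed.

Lemma waterfill_level (x : K -> R) c : (exists k, b k = c) ->
  exists t, \sum_(k | b k == c) Num.max (x k - t) 0 = 1.
Proof.
move=> [k0 bk0]; pose M := norm1 x.
have xM k : `|x k| <= M := ler_norm1 x k.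
have M0 : 0 <= M := norm1_ge0 x.
pose g t := \sum_(k | b k == c) Num.max (x k - t) 0.
have g_cont : continuous g.
  apply: continuous_big; first exact: add_continuous.
  move=> k _ t; apply: (@continuous_max R R (fun t => x k - t) (fun _ => 0) t).
    by apply: cvgB; [exact: cvg_cst | exact: cvg_id].
  exact: cvg_cst.
have gM : g M = 0.
  apply: big1 => k _; apply/max_idPr.
  by have := xM k; have := ler_norm (x k); lra.
have g_low : 1 <= g (- (M + 1)).
  rewrite /g (bigD1 k0) ?bk0 ?eqxx //=.
  have : 0 <= \sum_(k | (b k == c) && (k != k0)) Num.max (x k - - (M + 1)) 0.
    by apply: sumr_ge0 => *; rewrite le_max lexx orbT.
  suff : 1 <= Num.max (x k0 - - (M + 1)) 0 by lra.
  rewrite le_max; apply/orP; left.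
  by have := xM k0; have := ler_norm (- x k0); rewrite normrN; lra.
have [t _ gt1] := @IVT R g (- (M + 1)) M 1 ltac:(lra)
  (continuous_subspaceT g_cont)
  ltac:(by rewrite gM ge_min le_max g_low; apply/andP; split; [apply/orP; right; lra | ]).
by exists t.
Qed.

(* Water-filling: on each fiber the projection is max(x - tau, 0), with tau given by
   waterfill_level. *)
Lemma fiber_simplex_proj_exists (x : K -> R) : (forall c, exists k, b k = c) ->
  exists y, fiber_simplex y /\ proj_ineq fiber_simplex x y.
Proof.
move=> b_surj.
have [tau tauE] := choice _ (fun c => waterfill_level x (b_surj c)).
pose y k := Num.max (x k - tau (b k)) 0.
have Cy : fiber_simplex y.
  split=> [k | c]; first by rewrite /y le_max lexx orbT.
  by rewrite -(tauE c); apply: eq_bigr => k /eqP <-.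
exists y; split=> // z [z0 z1].
apply: (@le_trans _ _ (\sum_k tau (b k) * (z k - y k))).
  apply: ler_sum => k _; rewrite /y.
  case: (leP 0 (x k - tau (b k))) => h.
    by have -> : x k - (x k - tau (b k)) = tau (b k) by ring.
  by rewrite !subr0; have := z0 k; nra.
rewrite (partition_big b xpredT) //= big1 // => c _.
rewrite (eq_bigr (fun k => tau c * (z k - y k))); last by move=> k /eqP ->.
by rewrite -mulr_sumr sumrB z1 (proj2 Cy) subrr mulr0.
Qed.

Lemma Proj_fiber_simplex (x y : K -> R) : (forall c, exists k, b k = c) ->
  fiber_simplex y -> (y = Proj fiber_simplex x <-> proj_ineq fiber_simplex x y).
Proof.
move=> b_surj; apply: Proj_eq; first exact: convex_fiber_simplex.
exact: fiber_simplex_proj_exists.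
Qed.

End FiberSimplex.

Lemma tsum_mulr (R : realType) (u : nat -> R) (c : R) : cvgn (series u) ->
  tsum (fun t => u t * c) = tsum u * c.
Proof.
move=> cu; rewrite /tsum.
have -> : (fun n => \sum_(0 <= t < n) u t * c) = (fun n => series u n * c).
  by apply: funext => n; rewrite /series /= mulr_suml.
by apply: cvg_lim; [exact: norm_hausdorff | exact: cvgMr_tmp].
Qed.

Section Neumann.
Variables (R : realType) (S : finType).
Implicit Types (q : S -> S -> R) (v w b : S -> R).

Definition kmul q v : S -> R := fun s' => \sum_s v s * q s s'.

Definition row_norm_le q (rho : R) := forall s, \sum_s' `|q s s'| <= rho.

Lemma kmulB q v w s' : kmul q (fun s => v s - w s) s' = kmul q v s' - kmul q w s'.
Proof. by rewrite /kmul -sumrB; apply: eq_bigr => s _; rewrite mulrBl. Qed.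

Lemma norm1_kmul_le q rho v : row_norm_le q rho -> norm1 (kmul q v) <= rho * norm1 v.
Proof.
move=> qrho; rewrite /norm1 /kmul.
apply: (@le_trans _ _ (\sum_s' \sum_s `|v s| * `|q s s'|)).
  apply: ler_sum => s' _; apply: le_trans (ler_norm_sum _ _ _) _.
  by apply: ler_sum => s _; rewrite normrM.
rewrite exchange_big /= mulr_sumr; apply: ler_sum => s _.
by rewrite -mulr_sumr mulrC; apply: ler_wpM2r; [exact: normr_ge0 | exact: qrho].
Qed.

Lemma norm1_iter_kmul_le q rho b t : 0 <= rho -> row_norm_le q rho ->
  norm1 (iter t (kmul q) b) <= rho ^+ t * norm1 b.
Proof.
move=> rho0 qrho; elim: t => [|t IH]; first by rewrite expr0 mul1r.
rewrite iterS; apply: le_trans (norm1_kmul_le _ qrho) _.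
by rewrite exprS -mulrA; apply: ler_wpM2l.
Qed.

Lemma iter_kmul_ge0 q b t : (forall s s', 0 <= q s s') -> (forall s, 0 <= b s) ->
  forall s, 0 <= iter t (kmul q) b s.
Proof.
move=> q0 b0; elim: t => [|t IH] s //=.
by apply: sumr_ge0 => s1 _; apply: mulr_ge0.
Qed.

Lemma norm1_fixpoint_le q rho (g : R) v r : row_norm_le q rho -> 0 <= g ->
  (forall s', v s' = g * kmul q v s' + r s') -> (1 - g * rho) * norm1 v <= norm1 r.
Proof.
move=> qrho g0 vE.
have v_le : norm1 v <= g * norm1 (kmul q v) + norm1 r.
  rewrite /norm1 mulr_sumr -big_split /=; apply: ler_sum => s _.
  by rewrite vE; apply: le_trans (ler_normD _ _) _; rewrite normrM ger0_norm.
have : g * norm1 (kmul q v) <= g * (rho * norm1 v).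
  by apply: ler_wpM2l => //; exact: norm1_kmul_le.
by have := norm1_ge0 v; nra.
Qed.

Lemma norm1_linear_fixpoint_le q dq rho (g : R) v w :
  row_norm_le q 1 -> row_norm_le dq rho -> 0 <= g ->
  (forall s', v s' = g * kmul q v s' + g * kmul dq w s') ->
  (1 - g) * norm1 v <= g * rho * norm1 w.
Proof.
move=> q1 dqrho g0 vE; have := norm1_fixpoint_le q1 g0 vE.
rewrite mulr1 norm1_scale ger0_norm // => /le_trans; apply.
by rewrite -mulrA ler_wpM2l //; exact: norm1_kmul_le.
Qed.

Definition neumann q (g : R) b s : R := tsum (fun t => g ^+ t * iter t (kmul q) b s).

Section NeumannFixpoint.
Variables (q : S -> S -> R) (rho g : R) (b : S -> R).
Hypotheses (rho0 : 0 <= rho) (qrho : row_norm_le q rho) (g0 : 0 <= g) (grho : g * rho < 1).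

Lemma neumann_cvg s : cvgn (series (fun t => g ^+ t * iter t (kmul q) b s)).
Proof.
apply: normed_cvg.
have grho0 : 0 <= g * rho by apply: mulr_ge0.
apply: (@series_le_cvg R _ (geometric (norm1 b) (g * rho))).
- by move=> n; exact: normr_ge0.
- by move=> n; apply: mulr_ge0; [exact: norm1_ge0 | exact: exprn_ge0].
- move=> n; rewrite /geometric /= normrM ger0_norm ?exprn_ge0 //.
  apply: le_trans (ler_wpM2l (exprn_ge0 _ g0)
    (le_trans (ler_norm1 _ s) (norm1_iter_kmul_le b n rho0 qrho))) _.
  by rewrite exprMn mulrA mulrC.
- by apply: is_cvg_geometric_series; rewrite ger0_norm.
Qed.

Lemma neumann_fixpoint s' : neumann q g b s' = b s' + g * kmul q (neumann q g b) s'.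
Proof.
pose S_ s := series (fun t => g ^+ t * iter t (kmul q) b s).
have shift n : S_ s' n.+1 = b s' + g * \sum_s S_ s n * q s s'.
  rewrite /S_ /series /= big_nat_recl //= expr0 mul1r; congr (_ + _).
  rewrite mulr_sumr (eq_bigr (fun s => \sum_(0 <= t < n)
    g * (g ^+ t * iter t (kmul q) b s * q s s'))); last first.
    by move=> s _; rewrite mulr_suml mulr_sumr.
  rewrite exchange_big /=; apply: eq_bigr => t _.
  by rewrite exprS /kmul mulr_sumr; apply: eq_bigr => s _; ring.
have cvg_lhs : ((fun n => b s' + g * \sum_s S_ s n * q s s') @ \oo -->
    neumann q g b s')%classic.
  by rewrite -(funext shift) (cvg_shiftS (S_ s')); exact: (@neumann_cvg s').
have cvg_rhs : ((fun n => b s' + g * \sum_s S_ s n * q s s') @ \oo -->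
    b s' + g * kmul q (neumann q g b) s')%classic.
  apply: cvgD; first exact: cvg_cst.
  apply: cvgMl_tmp; apply: cvg_big; first exact: add_continuous.
  by move=> s _; apply: cvgMr_tmp; exact: (@neumann_cvg s).
by rewrite -(cvg_lim (@norm_hausdorff _ _) cvg_lhs) -(cvg_lim (@norm_hausdorff _ _) cvg_rhs).
Qed.

Lemma neumann_ge0 s : (forall s s', 0 <= q s s') -> (forall s, 0 <= b s) ->
  0 <= neumann q g b s.
Proof.
move=> q0 b0; apply: limr_ge; first exact: (@neumann_cvg s).
apply: nearW => n; apply: sumr_ge0 => t _; apply: mulr_ge0; first exact: exprn_ge0.
exact: iter_kmul_ge0.
Qed.

Lemma neumann_unique v : (forall s', v s' = b s' + g * kmul q v s') -> v = neumann q g b.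
Proof.
move=> vE; pose d s := v s - neumann q g b s.
have dE s' : d s' = g * kmul q d s' + 0.
  by rewrite /d kmulB vE neumann_fixpoint; ring.
have := norm1_fixpoint_le qrho g0 dE.
have -> : norm1 (fun _ : S => 0 : R) = 0 by rewrite /norm1 big1 // => ? _; rewrite normr0.
have grho1 : 0 < 1 - g * rho by rewrite subr_gt0.
move=> d_le; have /norm1_le0 d0 : norm1 d <= 0 by rewrite -(pmulr_rle0 _ grho1).
by apply: funext => s; apply/eqP; rewrite -subr_eq0 -/(d s) d0.
Qed.

End NeumannFixpoint.
End Neumann.

Section Frechet.
Variables (R : realType) (I : finType).
Implicit Types (f : (I -> R) -> R) (x y g h : I -> R) (D : (I -> R) -> Prop).

Lemma norm_dot_le (a v : I -> R) : `|\sum_k a k * v k| <= norm1 a * norm1 v.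
Proof.
apply: le_trans (ler_norm_sum _ _ _) _; rewrite /norm1 mulr_suml; apply: ler_sum => k _.
by rewrite normrM; apply: ler_wpM2l; [exact: normr_ge0 | exact: ler_norm1].
Qed.

Lemma le0_of_le_eps (x W : R) : 0 <= W -> (forall e, 0 < e -> x <= e * W) -> x <= 0.
Proof.
move=> W0 xle; rewrite leNgt; apply/negP => x0.
have e0 : 0 < x / (2 * (W + 1)) by rewrite divr_gt0 // mulr_gt0 // ltr_pwDr.
have := xle _ e0; rewrite mulrAC -mulrA.
have : W / (2 * (W + 1)) < 1 by rewrite ltr_pdivrMr ?mulr_gt0 ?ltr_pwDr // mul1r; lra.
have : 0 <= W / (2 * (W + 1)) by rewrite divr_ge0 // mulr_ge0 // addr_ge0.
nra.
Qed.

Lemma small_step (T W d : R) : 0 < T -> 0 <= W -> 0 < d -> exists2 t, 0 < t <= T & t * W <= d.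
Proof.
move=> T0 W0 d0; set t := Num.min T (d / (W + 1)).
have t0 : 0 < t by rewrite lt_min T0 divr_gt0 // ltr_pwDr.
exists t; first by rewrite t0 ge_min lexx.
have : t <= d / (W + 1) by rewrite ge_min lexx orbT.
by rewrite ler_pdivlMr ?ltr_pwDr //; nra.
Qed.

Definition frechet_at f x g D :=
  forall e : R, 0 < e -> exists2 d : R, 0 < d & forall h, D h -> norm1 h <= d ->
    `|f (fun k => x k + h k) - f x - \sum_k g k * h k| <= e * norm1 h.

Lemma diffble_frechet f x : diffble f x -> exists g, frechet_at f x g (fun=> True).
Proof.
case=> g fg; exists g => e e0; have [d [d0 fgd]] := fg e e0.
by exists d => // h _ hd; apply: fgd => k; apply: le_trans (ler_norm1 h k) hd.
Qed.

Lemma eq_frechet_at f f' x g D : D (fun=> 0) ->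
  (forall h, D h -> f (fun k => x k + h k) = f' (fun k => x k + h k)) ->
  frechet_at f x g D -> frechet_at f' x g D.
Proof.
move=> D0 ff' fg e e0; have [d d0 fgd] := fg e e0; exists d => // h Dh hd.
have fx : f x = f' x.
  by have := ff' _ D0; rewrite (_ : (fun k => x k + 0) = x) // funeqE => k; rewrite addr0.
by rewrite -ff' // -fx; exact: fgd.
Qed.

Lemma pderiv_frechet f x g D k : frechet_at f x g D ->
  (forall t, D (fun k' => if k' == k then t else 0)) -> pderiv f x k = g k.
Proof.
move=> fg Dk; apply: cvg_lim; first exact: norm_hausdorff.
pose et t k' : R := if k' == k then t else 0.
have etE t : (fun k' => if k' == k then x k' + t else x k') = (fun k' => x k' + et t k').
  by apply: funext => k'; rewrite /et; case: eqP => _; rewrite ?addr0.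
have et0 : (fun k' => if k' == k then x k' + 0 else x k') = x.
  by apply: funext => k'; case: eqP => _; rewrite ?addr0.
have sum_et (F : I -> R -> R) : (forall k', F k' 0 = 0) ->
    forall t, \sum_k' F k' (et t k') = F k t.
  move=> F0 t; rewrite (bigD1 k) //= /et eqxx big1 ?addr0 // => k' /negbTE ->.
  exact: F0.
apply/cvgrPdist_le => e e0; have [d d0 fgd] := fg e e0.
exists d => // t /=; rewrite distrC subr0 => td t0.
rewrite addr0 etE et0.
have := fgd (et t) (Dk t).
rewrite (sum_et (fun k' t => g k' * t)) => [|k']; last exact: mulr0.
rewrite /norm1 (sum_et (fun _ t => `|t|)) => [/(_ (ltW td)) ft|_]; last exact: normr0.
rewrite -[X in `|X - _|](mulfK (t0 : t != 0)) mulrC -mulrBr normrM normfV distrC.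
have it : 0 <= `|t|^-1 by rewrite invr_ge0 normr_ge0.
apply: le_trans (ler_wpM2l it ft) _.
by rewrite mulrCA mulVf ?normr_eq0 // mulr1.
Qed.

Lemma frechet_at_bounded f x g (C : R) : frechet_at f x g (fun=> True) -> 0 <= C ->
  forall e, 0 < e -> exists2 d, 0 < d & forall h (r : R), 0 <= r -> r <= d ->
    norm1 h <= C * r -> `|f (fun k => x k + h k) - f x - \sum_k g k * h k| <= e * r.
Proof.
move=> fg C0 e e0; have C1 : 0 < C + 1 by rewrite ltr_pwDr.
pose q := e / (C + 1); have q0 : 0 < q by rewrite divr_gt0.
have qE : q * (C + 1) = e by rewrite /q mulfVK // gt_eqF.
have [d d0 fgd] := fg q q0.
exists (d / (C + 1)) => [|h r r0 rd hr]; first by rewrite divr_gt0.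
have dE : d / (C + 1) * (C + 1) = d by rewrite mulfVK // gt_eqF.
apply: le_trans (fgd h Logic.I _) _; first by apply: le_trans hr _; nra.
by rewrite -qE; have := norm1_ge0 h; nra.
Qed.

Lemma frechet_max_first_order f x g D y : frechet_at f x g D ->
  (forall t, 0 < t <= 1 ->
     D (fun k => t * (y k - x k)) /\ f (fun k => x k + t * (y k - x k)) <= f x) ->
  \sum_k g k * (y k - x k) <= 0.
Proof.
move=> fg xmax; pose W := norm1 (fun k => y k - x k).
have W0 : 0 <= W := norm1_ge0 _.
apply: (le0_of_le_eps W0) => e e0; have [d d0 fgd] := fg e e0.
have [t t01 tW] := small_step ltr01 W0 d0; have [t0 _] := andP t01.
have [Dt ft] := xmax t t01.
have := fgd _ Dt; rewrite norm1_scale -/W ger0_norm ?(ltW t0) // => /(_ tW).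
have -> : \sum_k g k * (t * (y k - x k)) = t * \sum_k g k * (y k - x k).
  by rewrite mulr_sumr; apply: eq_bigr => k _; ring.
rewrite ler_norml => /andP[lo _].
have : t * \sum_k g k * (y k - x k) <= t * (e * W) by lra.
by rewrite ler_pM2l.
Qed.

Lemma le_of_frechet_path f x g D y (p : R -> I -> R) (T W : R) :
  frechet_at f x g D -> 0 < T -> 0 <= W ->
  (forall t, 0 < t <= T ->
     [/\ D (fun k => p t k - x k), norm1 (fun k => p t k - x k) <= t * W,
         \sum_k g k * (p t k - x k) <= 0 & t * f y + (1 - t) * f x <= f (p t)]) ->
  f y <= f x.
Proof.
move=> fg T0 W0 path; rewrite -subr_le0.
apply: (le0_of_le_eps W0) => e e0; have [d d0 fgd] := fg e e0.
have [t tT tW] := small_step T0 W0 d0; have [t0 _] := andP tT.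
have [Dt near gle conc] := path t tT.
have := fgd _ Dt (le_trans near tW).
have -> : (fun k => x k + (p t k - x k)) = p t by apply: funext => k; rewrite addrC subrK.
rewrite ler_norml => /andP[_ hi].
have eW : e * norm1 (fun k => p t k - x k) <= e * (t * W) by rewrite ler_pM2l.
have : t * (f y - f x) <= t * (e * W) by lra.
by rewrite ler_pM2l.
Qed.

End Frechet.

Lemma frechet_comp (R : realType) (I J : finType) (f : (J -> R) -> R) (gf : J -> R)
    (phi : (I -> R) -> J -> R) (x : I -> R) (L : I -> J -> R) (D : (I -> R) -> Prop)
    (d0 C1 C2 : R) :
  frechet_at f (phi x) gf (fun=> True) -> 0 < d0 -> 0 <= C1 -> 0 <= C2 ->
  (forall h, D h -> norm1 h <= d0 ->
     norm1 (fun j => phi (fun k => x k + h k) j - phi x j) <= C1 * norm1 h /\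
     norm1 (fun j => phi (fun k => x k + h k) j - phi x j - \sum_k h k * L k j)
       <= C2 * norm1 h ^+ 2) ->
  frechet_at (fun y => f (phi y)) x (fun k => \sum_j gf j * L k j) D.
Proof.
move=> fgf d00 C10 C20 phiL e e0.
have e20 : 0 < e / 2 by rewrite divr_gt0.
have [d1 d10 fgf_le] := frechet_at_bounded fgf C10 e20.
have GC0 : 0 <= norm1 gf * C2 by rewrite mulr_ge0 ?norm1_ge0.
have GC1 : 0 < norm1 gf * C2 + 1 by rewrite ltr_pwDr.
exists (Num.min d0 (Num.min d1 (e / 2 / (norm1 gf * C2 + 1)))) => [|h Dh].
  by rewrite !lt_min d00 d10 !divr_gt0.
rewrite !le_min => /and3P[hd0 hd1 hd2].
have h0 := norm1_ge0 h; have [lip quad] := phiL h Dh hd0.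
pose w j := phi (fun k => x k + h k) j - phi x j.
have := fgf_le w (norm1 h) h0 hd1 lip.
rewrite (_ : (fun j => phi x j + w j) = phi (fun k => x k + h k)) => [fw|]; last first.
  by apply: funext => j; rewrite /w addrC subrK.
have rem : `|\sum_j gf j * (w j - \sum_k h k * L k j)| <= e / 2 * norm1 h.
  apply: le_trans (norm_dot_le _ _) _; apply: le_trans (ler_wpM2l (norm1_ge0 _) quad) _.
  move: hd2; rewrite ler_pdivlMr // expr2 mulrA => hd2.
  by have := mulr_ge0 GC0 h0; nra.
have -> : \sum_k (\sum_j gf j * L k j) * h k =
    \sum_j gf j * w j - \sum_j gf j * (w j - \sum_k h k * L k j).
  rewrite -sumrB (eq_bigr (fun k => \sum_j gf j * (h k * L k j))); last first.
    by move=> k _; rewrite mulr_suml; apply: eq_bigr => j _; ring.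
  rewrite exchange_big; apply: eq_bigr => j _; rewrite -mulr_sumr; ring.
set A := f _; set B := f _; set S1 := \sum_j _; set S2 := \sum_j _.
have -> : A - B - (S1 - S2) = (A - B - S1) + S2 by ring.
apply: le_trans (ler_normD _ _) _.
by have := lerD fw rem; rewrite -mulrDl -splitr.
Qed.

Section Policies.
Variable R : realType.
Variables (N : nat) (S : finType) (A : 'I_N -> finType).
Local Notation pc := (pcoord S A).

Definition agent_state (k : pc) : 'I_N * S := (tag k, (tagged k).1).

Lemma sum_pcoord (f : pc -> R) : \sum_k f k = \sum_j \sum_(x : (S * A j)%type) f (mkc x).
Proof.
rewrite (@sig_big_dep _ 0 +%R 'I_N (fun j => (S * A j)%type) xpredT (fun _ _ => true)
  (fun j x => f (mkc x))) /=.
by apply: eq_bigr => -[j x].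
Qed.

Lemma sum_agent_state (p : pc -> R) j s :
  \sum_(k | agent_state k == (j, s)) p k = \sum_(a : A j) p (mkc (s, a)).
Proof.
rewrite big_mkcond sum_pcoord (bigD1 j) //= [X in _ + X]big1 ?addr0; last first.
  by move=> j' j'j; apply: big1 => x _; rewrite /agent_state /= xpair_eqE (negbTE j'j).
rewrite sum_pair (bigD1 s) //= [X in _ + X]big1 ?addr0; last first.
  by move=> s' s's; apply: big1 => a _; rewrite /agent_state /= xpair_eqE eqxx (negbTE s's).
by apply: eq_bigr => a _; rewrite /agent_state /= xpair_eqE !eqxx.
Qed.

Lemma inPi_ge0 (pi : pc -> R) : inPi pi -> forall k, 0 <= pi k.
Proof. by move=> piP [j [s a]]; exact: (proj1 (piP j s) a). Qed.

Lemma inPi_le1 (pi : pc -> R) : inPi pi -> forall k, pi k <= 1.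
Proof.
move=> piP [j [s a]]; have [pi0 pi1] := piP j s.
by rewrite -pi1 /restr (bigD1 a) //= lerDl; apply: sumr_ge0 => b _; exact: pi0.
Qed.

Lemma jpol_ge0 (pi : pc -> R) : inPi pi -> forall s a, 0 <= jpol pi s a.
Proof. by move=> piP s a; apply: prodr_ge0 => j _; exact: inPi_ge0. Qed.

Lemma sum_jpol (pi : pc -> R) : inPi pi -> forall s, \sum_a jpol pi s a = 1.
Proof.
move=> piP s; rewrite /jpol (@sum_dffun_prod R _ A (fun j t => pi (mkc (s, t)))).
by apply: big1 => j _; exact: (proj2 (piP j s)).
Qed.

Lemma inPiE : @inPi R N S A = fiber_simplex agent_state.
Proof.
apply: funext => p; apply: propext; split=> [piP | [p0 p1] j s].
  split=> [[j [s a]] | [j s]]; first exact: (proj1 (piP j s) a).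
  by rewrite sum_agent_state; exact: (proj2 (piP j s)).
by split=> [a | ]; [exact: p0 | rewrite -(p1 (j, s)) sum_agent_state].
Qed.

Lemma inPi_iE j : @inPi_i R N S A j = fiber_simplex (@fst S (A j)).
Proof.
apply: funext => p; apply: propext; have sum_fst (s : S) :
    \sum_(x | x.1 == s) p x = \sum_(a : A j) p (s, a).
  rewrite big_mkcond sum_pair (bigD1 s) //= [X in _ + X]big1 ?addr0; last first.
    by move=> s' s's; apply: big1 => a _; rewrite /= (negbTE s's).
  by apply: eq_bigr => a _; rewrite /= eqxx.
split=> [piP | [p0 p1] s].
  by split=> [[s a] | s]; [exact: (proj1 (piP s) a) | rewrite sum_fst; exact: (proj2 (piP s))].
by split=> [a | ]; [exact: p0 | rewrite -(p1 s) sum_fst].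
Qed.

Lemma inPi_convex : convex_pred (@inPi R N S A).
Proof. by rewrite inPiE; exact: convex_fiber_simplex. Qed.

Lemma inPi_action_exists (pi : pc -> R) : inPi pi -> forall j (s : S), exists a : A j, true.
Proof.
move=> piP j s; case: (pickP (fun _ : A j => true)) => [a _ | none]; first by exists a.
have := proj2 (piP j s); rewrite big_pred0 // => /eqP.
by rewrite eq_sym oner_eq0.
Qed.

Lemma Proj_inPi (pi x : pc -> R) : inPi pi ->
  (pi = Proj (@inPi R N S A) x <-> proj_ineq (@inPi R N S A) x pi).
Proof.
move=> piP; have := piP; rewrite inPiE => piF; apply: Proj_fiber_simplex => // -[j s].
by have [a _] := inPi_action_exists piP j s; exists (mkc (s, a)).
Qed.

Lemma Proj_inPi_i (pi : pc -> R) j (y x : (S * A j)%type -> R) : inPi pi -> inPi_i j y ->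
  (y = Proj (@inPi_i R N S A j) x <-> proj_ineq (@inPi_i R N S A j) x y).
Proof.
move=> piP; rewrite inPi_iE => yF; apply: Proj_fiber_simplex => // s.
by have [a _] := inPi_action_exists piP j s; exists (s, a).
Qed.

Section Deviations.
Variable pis : pc -> R.
Hypothesis pis_Pi : inPi pis.

(* [pick] finds the x with mkc x = k, which avoids casting k along tag k = i. *)
Definition set_agent i (zi : (S * A i)%type -> R) : pc -> R := fun k =>
  if [pick x : (S * A i)%type | mkc x == k] is Some x then zi x else pis k.

Lemma set_agent_on i (zi : (S * A i)%type -> R) (x : (S * A i)%type) :
  set_agent zi (mkc x) = zi x.
Proof.
rewrite /set_agent; case: pickP => [y /eqP yx | none]; first by rewrite (eq_from_Tagged yx).
by have := none x; rewrite eqxx.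
Qed.

Lemma set_agent_off i (zi : (S * A i)%type -> R) :
  forall k, tag k != i -> set_agent zi k = pis k.
Proof.
by move=> k ki; rewrite /set_agent; case: pickP => [y /eqP yk | //]; rewrite -yk /= eqxx in ki.
Qed.

Lemma inPi_set_agent i (zi : (S * A i)%type -> R) : inPi_i i zi -> inPi (set_agent zi).
Proof.
move=> ziP j s; case: (eqVneq j i) => [-> | ji].
  split=> [a | ]; rewrite /restr ?set_agent_on; first exact: (proj1 (ziP s)).
  by under eq_bigr => a _ do rewrite set_agent_on; exact: (proj2 (ziP s)).
split=> [a | ]; rewrite /restr ?set_agent_off //; first exact: (proj1 (pis_Pi j s)).
by under eq_bigr => a _ do rewrite set_agent_off //; exact: (proj2 (pis_Pi j s)).
Qed.

Lemma set_agent_restr z k : set_agent (restr z (tag k)) k = z k.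
Proof. by case: k => j x; rewrite set_agent_on. Qed.

Lemma sum_on_agent i (f : pc -> R) : (forall k, tag k != i -> f k = 0) ->
  \sum_k f k = \sum_(x : (S * A i)%type) f (mkc x).
Proof.
move=> f_off; rewrite sum_pcoord (bigD1 i) //= [X in _ + X]big1 ?addr0 // => j ji.
by apply: big1 => x _; exact: f_off.
Qed.

Lemma unilateral_ineq (v : pc -> R) :
  (forall i pi', inPi pi' -> (forall k, tag k != i -> pi' k = pis k) ->
     \sum_k v k * (pi' k - pis k) <= 0) <->
  forall z, inPi z -> \sum_k v k * (z k - pis k) <= 0.
Proof.
split=> [dev z zP | joint i pi' pi'P _]; last exact: joint.
have -> : \sum_k v k * (z k - pis k) =
    \sum_i \sum_k v k * (set_agent (restr z i) k - pis k).
  rewrite exchange_big /=; apply: eq_bigr => k _.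
  rewrite (bigD1 (tag k)) //= set_agent_restr big1 ?addr0 // => j kj.
  by rewrite set_agent_off 1?eq_sym // subrr mulr0.
apply: sumr_le0 => i _; apply: dev; first exact/inPi_set_agent/zP.
exact: set_agent_off.
Qed.

Lemma unilateral_ineq_restr (v : pc -> R) i :
  (forall pi', inPi pi' -> (forall k, tag k != i -> pi' k = pis k) ->
     \sum_k v k * (pi' k - pis k) <= 0) <->
  forall zi, inPi_i i zi -> \sum_x v (mkc x) * (zi x - restr pis i x) <= 0.
Proof.
split=> [dev zi ziP | agent pi' pi'P pi'_off].
  have := dev _ (inPi_set_agent ziP) (@set_agent_off i zi).
  rewrite (sum_on_agent (i := i)) => [|k ki]; last by rewrite set_agent_off // subrr mulr0.
  by under eq_bigr => x _ do rewrite set_agent_on.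
rewrite (sum_on_agent (i := i)) => [|k ki]; last by rewrite pi'_off // subrr mulr0.
exact: agent (pi'P i).
Qed.

End Deviations.

End Policies.

Section Occupancy.
Variable R : realType.
Variables (N : nat) (S : finType) (A : 'I_N -> finType).
Variables (P : S -> jact A -> S -> R) (mu : S -> R) (gamma : R).
Hypotheses (P_ge0 : forall s a s', 0 <= P s a s')
  (P_sum1 : forall s a, \sum_s' P s a s' = 1)
  (mu_ge0 : forall s, 0 <= mu s) (mu_sum1 : \sum_s mu s = 1)
  (gamma01 : 0 < gamma < 1).

Variable F : forall i : 'I_N, (pcoord S A -> R) -> (pcoord_mi S A i -> R) -> R.
Arguments F : clear implicits.

Local Notation pc := (pcoord S A).
Implicit Types pi : pc -> R.

Let gamma_ge0 : 0 <= gamma. Proof. by case/andP: gamma01 => /ltW. Qed.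
Let gamma_lt1 : gamma < 1. Proof. by case/andP: gamma01. Qed.

Definition ptrans pi s s' : R := \sum_(a : jact A) jpol pi s a * P s a s'.

Definition occ pi : S -> R := neumann (ptrans pi) gamma mu.

Lemma dmuE pi s : dmu P mu gamma pi s = (1 - gamma) * occ pi s.
Proof. by []. Qed.

Lemma ptrans_ge0 pi : inPi pi -> forall s s', 0 <= ptrans pi s s'.
Proof.
by move=> piP s s'; apply: sumr_ge0 => a _; apply: mulr_ge0; [exact: jpol_ge0 |].
Qed.

Lemma sum_ptrans pi : inPi pi -> forall s, \sum_s' ptrans pi s s' = 1.
Proof.
move=> piP s; rewrite /ptrans exchange_big /= -(sum_jpol piP s).
by apply: eq_bigr => a _; rewrite -mulr_sumr P_sum1 mulr1.
Qed.

Lemma row_norm_ptrans pi : inPi pi -> row_norm_le (ptrans pi) 1.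
Proof.
move=> piP s; rewrite -(sum_ptrans piP s) le_eqVlt; apply/orP; left; apply/eqP.
by apply: eq_bigr => s' _; rewrite ger0_norm //; exact: ptrans_ge0.
Qed.

Lemma occ_fixpoint pi rho : 0 <= rho -> row_norm_le (ptrans pi) rho -> gamma * rho < 1 ->
  forall s', occ pi s' = mu s' + gamma * kmul (ptrans pi) (occ pi) s'.
Proof. by move=> rho0 pirho grho; exact: (neumann_fixpoint mu rho0 pirho gamma_ge0 grho). Qed.

Lemma occ_fixpoint_Pi pi : inPi pi ->
  forall s', occ pi s' = mu s' + gamma * kmul (ptrans pi) (occ pi) s'.
Proof.
by move=> piP; apply: (occ_fixpoint ler01 (row_norm_ptrans piP)); rewrite mulr1.
Qed.

Lemma occ_ge0 pi : inPi pi -> forall s, 0 <= occ pi s.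
Proof.
move=> piP s; apply: (neumann_ge0 ler01 (row_norm_ptrans piP)) => //.
  by rewrite mulr1.
exact: ptrans_ge0.
Qed.

Lemma occ_sum pi : inPi pi -> (1 - gamma) * \sum_s occ pi s = 1.
Proof.
move=> piP.
have occE : \sum_s' occ pi s' = 1 + gamma * \sum_s occ pi s.
  transitivity (\sum_s' (mu s' + gamma * kmul (ptrans pi) (occ pi) s')).
    by apply: eq_bigr => s' _; exact: occ_fixpoint_Pi.
  rewrite big_split /= mu_sum1.
  rewrite -mulr_sumr /kmul exchange_big /=; congr (_ + _ * _).
  by apply: eq_bigr => s _; rewrite -mulr_sumr sum_ptrans // mulr1.
by rewrite mulrBl mul1r {1}occE; ring.
Qed.

(* Stated for any row-norm bound rho: perturbed profiles outside Pi need it too. *)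
Lemma lamE pi rho : 0 <= rho -> row_norm_le (ptrans pi) rho -> gamma * rho < 1 ->
  forall k, lam P mu gamma pi k = (1 - gamma) * (occ pi (tagged k).1 * pi k).
Proof.
move=> rho0 pirho grho k; rewrite /lam; congr (_ * _).
rewrite (_ : (fun t => _) = fun t => gamma ^+ t * stlaw P mu pi t (tagged k).1 * pi k).
  by rewrite tsum_mulr //; exact: (neumann_cvg (b := mu) rho0 pirho gamma_ge0 grho).
by apply: funext => t; rewrite mulrA.
Qed.

Lemma lamE_Pi pi : inPi pi ->
  forall k, lam P mu gamma pi k = (1 - gamma) * (occ pi (tagged k).1 * pi k).
Proof. by move=> piP; apply: (lamE ler01 (row_norm_ptrans piP)); rewrite mulr1. Qed.

Lemma lam_inLam pi : inPi pi -> inLam (lam P mu gamma pi).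
Proof.
move=> piP j; split=> [[s a] | ].
  rewrite lamE_Pi //; apply: mulr_ge0; first by rewrite subr_ge0 ltW.
  by apply: mulr_ge0; [exact: occ_ge0 | exact: inPi_ge0].
rewrite sum_pair -(occ_sum piP) mulr_sumr; apply: eq_bigr => s _.
rewrite (eq_bigr (fun a => (1 - gamma) * occ pi s * pi (mkc (s, a)))); last first.
  by move=> a _; rewrite lamE_Pi // mulrA.
by rewrite -mulr_sumr (proj2 (piP j s)) mulr1.
Qed.

Section Perturbation.
Variable i : 'I_N.
Variable pis : pc -> R.
Hypothesis pis_Pi : inPi pis.

Definition on_agent (h : pc -> R) := forall k, tag k != i -> h k = 0.

Definition perturb (h : pc -> R) : pc -> R := fun k => pis k + h k.

Definition others_prob s (a : jact A) : R := \prod_(j | j != i) pis (mkc (s, a j)).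

Definition dtrans (h : pc -> R) s s' : R :=
  \sum_a others_prob s a * h (mkc (s, a i)) * P s a s'.

Definition njact : R := #|{: jact A}|%:R.

Lemma others_prob_ge0 s a : 0 <= others_prob s a.
Proof. by apply: prodr_ge0 => j _; exact: inPi_ge0. Qed.

Lemma others_prob_le1 s a : others_prob s a <= 1.
Proof. by apply: prodr_ile1 => j _; rewrite inPi_ge0 ?inPi_le1. Qed.

Lemma jpol_split p : (forall k, tag k != i -> p k = pis k) ->
  forall s a, jpol p s a = others_prob s a * p (mkc (s, a i)).
Proof.
move=> p_off s a; rewrite /jpol (bigD1 i) //= mulrC; congr (_ * _).
by apply: eq_bigr => j ji; exact: p_off.
Qed.

Lemma perturb_off h : on_agent h -> forall k, tag k != i -> perturb h k = pis k.
Proof. by move=> h_on k ki; rewrite /perturb h_on // addr0. Qed.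

Lemma ptrans_perturb h : on_agent h ->
  forall s s', ptrans (perturb h) s s' = ptrans pis s s' + dtrans h s s'.
Proof.
move=> h_on s s'; rewrite /ptrans /dtrans -big_split /=; apply: eq_bigr => a _.
rewrite (jpol_split (perturb_off h_on)) (jpol_split (fun _ _ => erefl)) /perturb; ring.
Qed.

Lemma row_norm_dtrans h : row_norm_le (dtrans h) (njact * norm1 h).
Proof.
move=> s; rewrite /dtrans.
apply: (@le_trans _ _ (\sum_s' \sum_(a : jact A) `|h (mkc (s, a i))| * P s a s')).
  apply: ler_sum => s' _; apply: le_trans (ler_norm_sum _ _ _) _; apply: ler_sum => a _.
  rewrite normrM (ger0_norm (P_ge0 _ _ _)) normrM (ger0_norm (others_prob_ge0 _ _)).
  apply: ler_wpM2r; first exact: P_ge0.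
  by rewrite -[leRHS]mul1r; apply: ler_wpM2r; [exact: normr_ge0 | exact: others_prob_le1].
rewrite exchange_big /= /njact mulr_natl -sumr_const; apply: ler_sum => a _.
by rewrite -mulr_sumr P_sum1 mulr1; exact: ler_norm1.
Qed.

Lemma row_norm_perturb h : on_agent h ->
  row_norm_le (ptrans (perturb h)) (1 + njact * norm1 h).
Proof.
move=> h_on s; apply: (@le_trans _ _ (\sum_s' (`|ptrans pis s s'| + `|dtrans h s s'|))).
  by apply: ler_sum => s' _; rewrite ptrans_perturb //; exact: ler_normD.
by rewrite big_split /=; apply: lerD; [exact: row_norm_ptrans | exact: row_norm_dtrans].
Qed.

(* Keeps gamma (1 + njact |h|) <= (1 + gamma) / 2 < 1, so that the occupancy of the
   perturbed profile exists and is bounded by 2 / (1 - gamma). *)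
Definition small (h : pc -> R) := gamma * (njact * norm1 h) <= (1 - gamma) / 2.

Definition docc (h : pc -> R) s := occ (perturb h) s - occ pis s.

Lemma dtrans_lin h s s' :
  dtrans h s s' = \sum_k h k * dtrans (fun k' => (k' == k)%:R) s s'.
Proof.
rewrite /dtrans.
transitivity (\sum_a \sum_k h k * (others_prob s a * (mkc (s, a i) == k)%:R * P s a s')).
  apply: eq_bigr => a _; rewrite (eq_bigr (fun k =>
    others_prob s a * P s a s' * (h k * (mkc (s, a i) == k)%:R))); last by move=> k _; ring.
  by rewrite -mulr_sumr sum_mul_indicator; ring.
by rewrite exchange_big /=; apply: eq_bigr => k _; rewrite mulr_sumr.
Qed.

Lemma kmul_dtrans_lin h (v : S -> R) s' :
  kmul (dtrans h) v s' = \sum_k h k * kmul (dtrans (fun k' => (k' == k)%:R)) v s'.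
Proof.
rewrite /kmul.
transitivity (\sum_s \sum_k h k * (v s * dtrans (fun k' => (k' == k)%:R) s s')).
  by apply: eq_bigr => s _; rewrite dtrans_lin mulr_sumr; apply: eq_bigr => k _; ring.
by rewrite exchange_big /=; apply: eq_bigr => k _; rewrite mulr_sumr.
Qed.

(* Solution of the fixpoint equation of docc linearised at h = 0, in direction k. *)
Definition docc_dir (k : pc) : S -> R :=
  neumann (ptrans pis) gamma
    (fun s' => gamma * kmul (dtrans (fun k' => (k' == k)%:R)) (occ pis) s').

Definition docc_lin (h : pc -> R) s : R := \sum_k h k * docc_dir k s.

Lemma docc_lin_fixpoint h s' : docc_lin h s' =
  gamma * kmul (ptrans pis) (docc_lin h) s' + gamma * kmul (dtrans h) (occ pis) s'.
Proof.
have dirE k : docc_dir k s' = gamma * kmul (dtrans (fun k' => (k' == k)%:R)) (occ pis) s'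
    + gamma * kmul (ptrans pis) (docc_dir k) s'.
  by apply: (neumann_fixpoint _ ler01 (row_norm_ptrans pis_Pi)); rewrite // mulr1.
rewrite /docc_lin (eq_bigr _ (fun k _ => congr1 (fun x => h k * x) (dirE k))).
rewrite kmul_dtrans_lin addrC (eq_bigr (fun k =>
  gamma * (h k * kmul (dtrans (fun k' => (k' == k)%:R)) (occ pis) s') +
  gamma * (h k * kmul (ptrans pis) (docc_dir k) s'))); last by move=> k _; ring.
rewrite big_split /= -!mulr_sumr; congr (_ + _ * _); rewrite /kmul; symmetry.
rewrite (eq_bigr (fun s => \sum_k h k * (docc_dir k s * ptrans pis s s'))); last first.
  by move=> s _; rewrite mulr_suml; apply: eq_bigr => k _; ring.
by rewrite exchange_big /=; apply: eq_bigr => k _; rewrite mulr_sumr.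
Qed.

Definition docc_rem (h : pc -> R) s := docc h s - docc_lin h s.

Definition dlam (k' k : pc) : R :=
  (1 - gamma) * (docc_dir k' (tagged k).1 * pis k + occ pis (tagged k).1 * (k == k')%:R).

Lemma sum_dlam h k : \sum_k' h k' * dlam k' k =
  (1 - gamma) * (docc_lin h (tagged k).1 * pis k + occ pis (tagged k).1 * h k).
Proof.
have -> : docc_lin h (tagged k).1 * pis k + occ pis (tagged k).1 * h k =
    \sum_k' h k' * (docc_dir k' (tagged k).1 * pis k + occ pis (tagged k).1 * (k == k')%:R).
  rewrite -(sum_mul_indicator h k) /docc_lin mulr_suml mulr_sumr -big_split /=.
  by apply: eq_bigr => k' _; ring.
by rewrite mulr_sumr; apply: eq_bigr => k' _; rewrite /dlam; ring.
Qed.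

Lemma norm1_occ_weighted (a b : S -> R) h :
  norm1 (fun k => (1 - gamma) * (a (tagged k).1 * pis k + b (tagged k).1 * h k)) <=
  (1 - gamma) * (#|{: pc}|%:R * norm1 a + norm1 b * norm1 h).
Proof.
have c0 : 0 <= 1 - gamma by rewrite subr_ge0 ltW.
rewrite norm1_scale ger0_norm // ler_wpM2l //.
apply: (@le_trans _ _ (\sum_k (norm1 a + norm1 b * `|h k|))).
  apply: ler_sum => k _; apply: le_trans (ler_normD _ _) _; rewrite !normrM; apply: lerD.
    rewrite -[leRHS]mulr1; apply: ler_pM; try exact: normr_ge0; first exact: ler_norm1.
    by rewrite ger0_norm ?inPi_le1 ?inPi_ge0.
  by apply: ler_wpM2r; [exact: normr_ge0 | exact: ler_norm1].
by rewrite big_split /= sumr_const mulr_natl -mulr_sumr.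
Qed.

Section SmallPerturbation.
Variable h : pc -> R.
Hypotheses (h_on : on_agent h) (h_small : small h).

Let rho_ge0 : 0 <= 1 + njact * norm1 h.
Proof. by apply: addr_ge0 => //; apply: mulr_ge0; [exact: ler0n | exact: norm1_ge0]. Qed.

Let grho_lt1 : gamma * (1 + njact * norm1 h) < 1.
Proof. by rewrite mulrDr mulr1; move: h_small gamma_lt1; rewrite /small; lra. Qed.

Lemma occ_perturb_fixpoint s' :
  occ (perturb h) s' = mu s' + gamma * kmul (ptrans (perturb h)) (occ (perturb h)) s'.
Proof. exact: (occ_fixpoint rho_ge0 (row_norm_perturb h_on) grho_lt1). Qed.

Lemma norm1_occ_perturb : (1 - gamma) * norm1 (occ (perturb h)) <= 2.
Proof.
have := norm1_fixpoint_le (row_norm_perturb h_on) gamma_ge0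
  (fun s' => etrans (occ_perturb_fixpoint s') (addrC _ _)).
have -> : norm1 mu = 1.
  by rewrite -mu_sum1; apply: eq_bigr => s _; rewrite ger0_norm.
rewrite mulrDr mulr1 => occ_le.
by have := norm1_ge0 (occ (perturb h)); move: h_small; rewrite /small; nra.
Qed.

Lemma docc_fixpoint s' : docc h s' =
  gamma * kmul (ptrans pis) (docc h) s' + gamma * kmul (dtrans h) (occ (perturb h)) s'.
Proof.
rewrite /docc {1}occ_perturb_fixpoint {1}(occ_fixpoint_Pi pis_Pi s') kmulB /kmul.
have -> : \sum_s occ (perturb h) s * ptrans (perturb h) s s' =
    \sum_s occ (perturb h) s * ptrans pis s s' + \sum_s occ (perturb h) s * dtrans h s s'.
  by rewrite -big_split; apply: eq_bigr => s _ /=; rewrite ptrans_perturb // mulrDr.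
ring.
Qed.

Lemma norm1_docc :
  (1 - gamma) * norm1 (docc h) <= gamma * (njact * norm1 h) * norm1 (occ (perturb h)).
Proof.
exact: norm1_linear_fixpoint_le (row_norm_ptrans pis_Pi) (row_norm_dtrans h) _ docc_fixpoint.
Qed.

Lemma docc_rem_fixpoint s' : docc_rem h s' =
  gamma * kmul (ptrans pis) (docc_rem h) s' + gamma * kmul (dtrans h) (docc h) s'.
Proof.
by rewrite /docc_rem docc_fixpoint docc_lin_fixpoint /docc !kmulB; ring.
Qed.

Lemma norm1_docc_rem :
  (1 - gamma) * norm1 (docc_rem h) <= gamma * (njact * norm1 h) * norm1 (docc h).
Proof.
by apply: norm1_linear_fixpoint_le (row_norm_ptrans pis_Pi) (row_norm_dtrans h) _ _;
  [exact: gamma_ge0 | exact: docc_rem_fixpoint].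
Qed.

Lemma norm1_docc_le : (1 - gamma) ^+ 2 * norm1 (docc h) <= 2 * (gamma * (njact * norm1 h)).
Proof.
have c0 : 0 <= 1 - gamma by rewrite subr_ge0 ltW.
have gJh0 : 0 <= gamma * (njact * norm1 h).
  by apply: mulr_ge0 => //; apply: mulr_ge0; [exact: ler0n | exact: norm1_ge0].
have := ler_wpM2l c0 norm1_docc; have := ler_wpM2l gJh0 norm1_occ_perturb.
by rewrite expr2; nra.
Qed.

Lemma norm1_docc_rem_le :
  (1 - gamma) ^+ 3 * norm1 (docc_rem h) <= 2 * (gamma * (njact * norm1 h)) ^+ 2.
Proof.
have c0 : 0 <= (1 - gamma) ^+ 2 by rewrite sqr_ge0.
have gJh0 : 0 <= gamma * (njact * norm1 h).
  by apply: mulr_ge0 => //; apply: mulr_ge0; [exact: ler0n | exact: norm1_ge0].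
have := ler_wpM2l c0 norm1_docc_rem; have := ler_wpM2l gJh0 norm1_docc_le.
by rewrite !exprS expr0 !mulr1; nra.
Qed.

Lemma lam_perturb_diff k : lam P mu gamma (perturb h) k - lam P mu gamma pis k =
  (1 - gamma) * (docc h (tagged k).1 * pis k + occ (perturb h) (tagged k).1 * h k).
Proof.
rewrite (lamE rho_ge0 (row_norm_perturb h_on) grho_lt1) lamE_Pi // /docc /perturb.
ring.
Qed.

Lemma lam_perturb_rem k :
  lam P mu gamma (perturb h) k - lam P mu gamma pis k - \sum_k' h k' * dlam k' k =
  (1 - gamma) * (docc_rem h (tagged k).1 * pis k + docc h (tagged k).1 * h k).
Proof. by rewrite lam_perturb_diff sum_dlam /docc_rem /docc; ring. Qed.

Lemma norm1_lam_perturb_diff :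
  (1 - gamma) * norm1 (fun k => lam P mu gamma (perturb h) k - lam P mu gamma pis k)
    <= (#|{: pc}|%:R * (2 * (gamma * njact)) + 2) * norm1 h.
Proof.
rewrite (funext lam_perturb_diff).
have c0 : 0 <= 1 - gamma by rewrite subr_ge0 ltW.
have c1 : 1 - gamma <= 1 by rewrite lerBlDr lerDl.
have h0 := norm1_ge0 h; have n0 : 0 <= #|{: pc}|%:R :> R := ler0n _ _.
apply: le_trans (ler_wpM2l c0 (norm1_occ_weighted _ _ _)) _.
have := ler_wpM2l n0 norm1_docc_le; have := ler_wpM2r h0 norm1_occ_perturb.
have := norm1_ge0 (occ (perturb h)); rewrite expr2 mulrDr; nra.
Qed.

Lemma norm1_lam_perturb_rem : (1 - gamma) ^+ 2 * norm1 (fun k =>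
    lam P mu gamma (perturb h) k - lam P mu gamma pis k - \sum_k' h k' * dlam k' k)
  <= (#|{: pc}|%:R * (2 * (gamma * njact) ^+ 2) + 2 * (gamma * njact)) * norm1 h ^+ 2.
Proof.
rewrite (funext lam_perturb_rem).
have c0 : 0 <= 1 - gamma by rewrite subr_ge0 ltW.
have c1 : 1 - gamma <= 1 by rewrite lerBlDr lerDl.
have h0 := norm1_ge0 h; have n0 : 0 <= #|{: pc}|%:R :> R := ler0n _ _.
apply: le_trans (ler_wpM2l (sqr_ge0 _) (norm1_occ_weighted _ _ _)) _.
have gJh0 : 0 <= 2 * (gamma * (njact * norm1 h)) * norm1 h.
  by rewrite !mulr_ge0 //; exact: ler0n.
have := ler_wpM2l n0 norm1_docc_rem_le.
have := le_trans (ler_wpM2l c0 (ler_wpM2r h0 norm1_docc_le)) (ler_piMl gJh0 c1).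
rewrite !exprS expr0 !mulr1 mulrDr; lra.
Qed.

End SmallPerturbation.

Lemma lam_expansion : exists d0 C1 C2 : R, [/\ 0 < d0, 0 <= C1, 0 <= C2 &
  forall h, on_agent h -> norm1 h <= d0 ->
    norm1 (fun k => lam P mu gamma (fun k' => pis k' + h k') k - lam P mu gamma pis k)
      <= C1 * norm1 h /\
    norm1 (fun k => lam P mu gamma (fun k' => pis k' + h k') k - lam P mu gamma pis k
                    - \sum_k' h k' * dlam k' k) <= C2 * norm1 h ^+ 2].
Proof.
have c0 : 0 < 1 - gamma by rewrite subr_gt0.
have gJ0 : 0 <= gamma * njact by rewrite mulr_ge0 // ler0n.
have n0 : 0 <= #|{: pc}|%:R :> R := ler0n _ _.
pose d0 := (1 - gamma) / (2 * (gamma * njact + 1)).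
have d00 : 0 < d0 by rewrite divr_gt0 // mulr_gt0 // ltr_pwDr.
have d0E : d0 * (gamma * njact + 1) = (1 - gamma) / 2.
  by rewrite /d0; field; rewrite gt_eqF // ltr_pwDr.
exists d0, ((#|{: pc}|%:R * (2 * (gamma * njact)) + 2) / (1 - gamma)),
  ((#|{: pc}|%:R * (2 * (gamma * njact) ^+ 2) + 2 * (gamma * njact)) / (1 - gamma) ^+ 2).
split=> [//||| h h_on hd0].
- by apply: divr_ge0; [nra | exact: ltW].
- apply: divr_ge0; last exact: exprn_ge0 (ltW c0).
  by apply: addr_ge0; rewrite ?mulr_ge0 ?exprn_ge0.
have h_small : small h.
  by rewrite /small mulrA -d0E; have := norm1_ge0 h; nra.
split.
  rewrite mulrAC ler_pdivlMr // mulrC; exact: norm1_lam_perturb_diff.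
by rewrite mulrAC ler_pdivlMr ?exprn_gt0 // mulrC; exact: norm1_lam_perturb_rem.
Qed.

Definition best_response :=
  forall pi', inPi pi' -> (forall k, tag k != i -> pi' k = pis k) ->
    util P mu gamma F i pi' <= util P mu gamma F i pis.

Definition stationary :=
  forall pi', inPi pi' -> (forall k, tag k != i -> pi' k = pis k) ->
    \sum_k vfield P mu gamma F pis k * (pi' k - pis k) <= 0.

Lemma pminus_off p : (forall k, tag k != i -> p k = pis k) -> pminus i p = pminus i pis.
Proof. by move=> p_off; apply: funext => k; rewrite /pminus p_off //; exact: valP k. Qed.

Hypothesis F_diff : diffble (Fjoint F i) (joinv i (lam P mu gamma pis) (pminus i pis)).

Lemma F_frechet : exists gl,
  frechet_at (fun l => F i l (pminus i pis)) (lam P mu gamma pis) gl (fun=> True).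
Proof.
have [gF gFP] := diffble_frechet F_diff.
exists (fun k => gF (inl k)) => e e0; have [d d0 gFd] := gFP e e0.
exists d => // l _ ld; pose w := joinv i l (fun=> 0).
have wl : norm1 w = norm1 l.
  by rewrite /norm1 big_sumType /= [X in _ + X]big1 ?addr0 // => k _; rewrite normr0.
have wsum : \sum_z gF z * w z = \sum_k gF (inl k) * l k.
  by rewrite big_sumType /= [X in _ + X]big1 ?addr0 // => k _; rewrite mulr0.
have := gFd w Logic.I; rewrite wl wsum => /(_ ld).
by rewrite /Fjoint /= (_ : (fun k => _) = pminus i pis) // funeqE => k; rewrite addr0.
Qed.

Lemma util_frechet : exists g, frechet_at (util P mu gamma F i) pis g on_agent.
Proof.
have [gl glP] := F_frechet.
have [d0 [C1 [C2 [d00 C10 C20 lamL]]]] := lam_expansion.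
exists (fun k => \sum_j gl j * dlam k j).
apply: eq_frechet_at (frechet_comp glP d00 C10 C20 lamL) => // h h_on.
by rewrite /util (pminus_off (perturb_off h_on)).
Qed.

Lemma vfield_frechet : exists2 g, frechet_at (util P mu gamma F i) pis g on_agent &
  forall k, tag k = i -> vfield P mu gamma F pis k = g k.
Proof.
have [g gP] := util_frechet; exists g => // k ki.
rewrite /vfield ki; apply: pderiv_frechet gP _ => t k' k'i.
by case: eqP => // k'k; rewrite k'k ki eqxx in k'i.
Qed.

Lemma sum_vfield_agent g : (forall k, tag k = i -> vfield P mu gamma F pis k = g k) ->
  forall pi', (forall k, tag k != i -> pi' k = pis k) ->
  \sum_k vfield P mu gamma F pis k * (pi' k - pis k) = \sum_k g k * (pi' k - pis k).
Proof.
move=> gv pi' pi'_off; apply: eq_bigr => k _.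
by case: (eqVneq (tag k) i) => [ki | ki]; [rewrite gv | rewrite pi'_off // subrr !mulr0].
Qed.

Lemma best_response_stationary : best_response -> stationary.
Proof.
move=> br pi' pi'P pi'_off; have [g gP gv] := vfield_frechet.
rewrite (sum_vfield_agent gv pi'_off).
apply: (frechet_max_first_order gP) => t /andP[t0 t1].
split=> [k ki | ]; first by rewrite pi'_off // subrr mulr0.
apply: br => [ | k ki]; last by rewrite pi'_off // subrr mulr0 addr0.
by apply: inPi_convex => //; rewrite (ltW t0).
Qed.

Hypothesis F_concave : forall l l', inLam l -> inLam l' -> forall t, 0 <= t <= 1 ->
  t * F i l (pminus i pis) + (1 - t) * F i l' (pminus i pis) <=
  F i (fun k => t * l k + (1 - t) * l' k) (pminus i pis).
Hypothesis dmu_gt0 : forall pi, inPi pi -> forall s, 0 < dmu P mu gamma pi s.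

Lemma occ_gt0 pi : inPi pi -> forall s, 0 < occ pi s.
Proof. by move=> piP s; have := dmu_gt0 piP s; rewrite dmuE pmulr_rgt0 // subr_gt0. Qed.

Section MixPolicy.
Variables (pi' : pc -> R) (t : R).
Hypotheses (pi'P : inPi pi') (pi'_off : forall k, tag k != i -> pi' k = pis k).
Hypotheses (t0 : 0 <= t) (t_half : 2 * t <= 1).

Definition mix_occ s : R := (1 - t) * occ pis s + t * occ pi' s.

(* The deviation of agent i whose occupancy measure is the mixture of those of pis
   and pi'; it is well defined because occ pis > 0 by (A2). *)
Definition mix_policy : pc -> R := fun k =>
  if tag k == i then
    ((1 - t) * occ pis (tagged k).1 * pis k + t * occ pi' (tagged k).1 * pi' k)
      / mix_occ (tagged k).1
  else pis k.

Lemma mix_occ_ge s : occ pis s / 2 <= mix_occ s.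
Proof.
have := occ_gt0 pis_Pi s; have := mulr_ge0 t0 (occ_ge0 pi'P s).
rewrite ler_pdivrMr // /mix_occ => tx0 x0.
have : 0 <= occ pis s * (1 - 2 * t) by rewrite mulr_ge0 ?subr_ge0 // ltW.
lra.
Qed.

Lemma mix_occ_gt0 s : 0 < mix_occ s.
Proof. by apply: lt_le_trans (mix_occ_ge s); rewrite divr_gt0 ?occ_gt0. Qed.

Lemma mix_policy_off : forall k, tag k != i -> mix_policy k = pis k.
Proof. by move=> k ki; rewrite /mix_policy (negbTE ki). Qed.

Lemma mix_policy_on s (a : A i) : mix_policy (mkc (s, a)) =
  ((1 - t) * occ pis s * pis (mkc (s, a)) + t * occ pi' s * pi' (mkc (s, a))) / mix_occ s.
Proof. by rewrite /mix_policy /= eqxx. Qed.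

Lemma inPi_mix_policy : inPi mix_policy.
Proof.
move=> j s; case: (eqVneq j i) => [-> | ji]; last first.
  by have := pis_Pi j s; rewrite /restr /mix_policy /= (negbTE ji).
have t1 : 0 <= 1 - t by move: t0 t_half; lra.
split=> [a | ]; rewrite /restr.
  rewrite mix_policy_on; apply: divr_ge0; last exact/ltW/mix_occ_gt0.
  apply: addr_ge0; apply: mulr_ge0; (try apply: mulr_ge0) => //;
    by [exact: inPi_ge0 | exact: occ_ge0].
under eq_bigr => a _ do rewrite mix_policy_on.
rewrite -mulr_suml big_split /= -!mulr_sumr.
have := proj2 (pis_Pi i s); have := proj2 (pi'P i s); rewrite /restr => -> ->.
by rewrite !mulr1 divff // gt_eqF // mix_occ_gt0.
Qed.

Lemma ptrans_mix_policy s s' : mix_occ s * ptrans mix_policy s s' =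
  (1 - t) * occ pis s * ptrans pis s s' + t * occ pi' s * ptrans pi' s s'.
Proof.
have m0 := mix_occ_gt0 s.
rewrite /ptrans !mulr_sumr -big_split /=; apply: eq_bigr => a _.
rewrite (jpol_split mix_policy_off) (jpol_split (fun _ _ => erefl)) (jpol_split pi'_off).
by rewrite mix_policy_on; field; rewrite gt_eqF.
Qed.

Lemma occ_mix_policy : occ mix_policy = mix_occ.
Proof.
symmetry; apply: (neumann_unique ler01 (row_norm_ptrans inPi_mix_policy) gamma_ge0).
  by rewrite mulr1.
move=> s'; have kmulE : kmul (ptrans mix_policy) mix_occ s' =
    (1 - t) * kmul (ptrans pis) (occ pis) s' + t * kmul (ptrans pi') (occ pi') s'.
  rewrite /kmul !mulr_sumr -big_split /=; apply: eq_bigr => s _.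
  by rewrite ptrans_mix_policy; ring.
rewrite kmulE /mix_occ {1}(occ_fixpoint_Pi pis_Pi s') {1}(occ_fixpoint_Pi pi'P s'); ring.
Qed.

Lemma lam_mix_policy :
  lam P mu gamma mix_policy =
  fun k => t * lam P mu gamma pi' k + (1 - t) * lam P mu gamma pis k.
Proof.
apply: funext => k; rewrite (lamE_Pi inPi_mix_policy) (lamE_Pi pi'P) (lamE_Pi pis_Pi).
rewrite occ_mix_policy /mix_policy; case: eqP => [ki | /eqP ki].
  by field; rewrite gt_eqF // mix_occ_gt0.
by rewrite pi'_off // /mix_occ; ring.
Qed.

Lemma util_mix_policy : t * util P mu gamma F i pi' + (1 - t) * util P mu gamma F i pis <=
  util P mu gamma F i mix_policy.
Proof.
rewrite /util (pminus_off pi'_off) (pminus_off mix_policy_off) lam_mix_policy.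
apply: F_concave; try exact: lam_inLam.
by rewrite t0 /=; move: t0 t_half; lra.
Qed.

Lemma mix_policy_near k :
  `|mix_policy k - pis k| <= t * \sum_s 2 * occ pi' s / occ pis s.
Proof.
case: (eqVneq (tag k) i) => ki; last first.
  rewrite mix_policy_off // subrr normr0; apply: mulr_ge0 => //.
  by apply: sumr_ge0 => s _; rewrite divr_ge0 ?mulr_ge0 ?occ_ge0 // ltW ?occ_gt0.
set s := (tagged k).1.
have m0 := mix_occ_gt0 s; have x0 := occ_gt0 pis_Pi s; have x'0 := occ_ge0 pi'P s.
have -> : mix_policy k - pis k = t * occ pi' s * (pi' k - pis k) / mix_occ s.
  rewrite /mix_policy (introT eqP ki) -/s; move: m0; rewrite /mix_occ => m0.
  by field; rewrite gt_eqF.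
have d1 : `|pi' k - pis k| <= 1.
  by rewrite ler_norml; have := inPi_ge0 pis_Pi k; have := inPi_le1 pis_Pi k;
    have := inPi_ge0 pi'P k; have := inPi_le1 pi'P k; lra.
have Ws : 2 * occ pi' s / occ pis s <= \sum_s 2 * occ pi' s / occ pis s.
  rewrite (bigD1 s) //= lerDl; apply: sumr_ge0 => s' _.
  by rewrite divr_ge0 ?mulr_ge0 ?occ_ge0 // ltW ?occ_gt0.
rewrite normrM normfV (gtr0_norm m0) ler_pdivrMr // normrM ger0_norm ?mulr_ge0 //.
apply: le_trans (_ : t * occ pi' s <= _).
  by rewrite -[leRHS]mulr1 ler_wpM2l ?mulr_ge0.
rewrite -mulrA ler_wpM2l //; apply: le_trans (ler_wpM2r (ltW m0) Ws).
have c0 : 0 <= 2 * occ pi' s / occ pis s by rewrite divr_ge0 ?mulr_ge0 // ltW.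
apply: le_trans (ler_wpM2l c0 (mix_occ_ge s)).
by rewrite [leRHS](_ : _ = occ pi' s) //; field; rewrite gt_eqF.
Qed.

End MixPolicy.

Lemma stationary_best_response : stationary -> best_response.
Proof.
move=> st pi' pi'P pi'_off; have [g gP gv] := vfield_frechet.
pose W := \sum_s 2 * occ pi' s / occ pis s.
have W0 : 0 <= W.
  by apply: sumr_ge0 => s _; rewrite divr_ge0 ?mulr_ge0 ?occ_ge0 // ltW ?occ_gt0.
apply: (le_of_frechet_path (p := mix_policy pi') (T := 2^-1) (W := #|{: pc}|%:R * W) gP).
- by rewrite invr_gt0.
- by rewrite mulr_ge0 ?ler0n.
move=> t /andP[t0 t_half]; have {}t0 := ltW t0.
have {}t_half : 2 * t <= 1 by rewrite -(ler_pM2l (ltr0n _ 2)) mulfV in t_half.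
split=> [k ki | | | ].
- by rewrite mix_policy_off // subrr.
- by rewrite mulrCA; apply: norm1_le_card => k; exact: mix_policy_near.
- rewrite -(sum_vfield_agent gv (mix_policy_off pi' t)); apply: st => //.
    exact: inPi_mix_policy.
  exact: mix_policy_off.
- exact: util_mix_policy.
Qed.

End Perturbation.
End Occupancy.

Theorem theorem1 (R : realType) (N : nat) (S : finType) (A : 'I_N -> finType)
  (P : S -> jact A -> S -> R) (mu : S -> R) (gamma : R)
  (F : forall i : 'I_N, (pcoord S A -> R) -> (pcoord_mi S A i -> R) -> R)
  (* transition kernel *)
  (HP0 : forall s a s', 0 <= P s a s')
  (HP1 : forall s a, \sum_(s' : S) P s a s' = 1)
  (* initial distribution *)
  (Hmu0 : forall s, 0 <= mu s) (Hmu1 : \sum_(s : S) mu s = 1)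
  (* discount *)
  (Hgamma : 0 < gamma < 1)
  (* F_i differentiable on Lambda x Pi_{-i} *)
  (HFdiff : forall (i : 'I_N) (l pi : pcoord S A -> R), inLam l -> inPi pi ->
     diffble (Fjoint F i) (joinv i l (pminus i pi)))
  (* (A1) joint concavity of lambda |-> F_i(lambda, pi_{-i}) on Lambda *)
  (HA1 : forall (i : 'I_N) (pi : pcoord S A -> R), inPi pi ->
     forall l l' : pcoord S A -> R, inLam l -> inLam l' ->
     forall t : R, 0 <= t <= 1 ->
       t * F i l (pminus i pi) + (1 - t) * F i l' (pminus i pi)
         <= F i (fun k => t * l k + (1 - t) * l' k) (pminus i pi))
  (* (A2) *)
  (HA2 : forall pi : pcoord S A -> R, inPi pi -> forall s, 0 < dmu P mu gamma pi s)
  (pistar : pcoord S A -> R) (Hpistar : inPi pistar) :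
  (Nash P mu gamma F pistar <->
     (forall eta : R, 0 < eta ->
        pistar = Proj (@inPi R N S A)
                   (fun k => pistar k + eta * vfield P mu gamma F pistar k)))
  /\
  (Nash P mu gamma F pistar <->
     (forall (i : 'I_N) (eta : R), 0 < eta ->
        restr pistar i = Proj (@inPi_i R N S A i)
                   (fun x => restr pistar i x + eta * grad_i P mu gamma F i pistar x))).
Proof.
have NashE : Nash P mu gamma F pistar <-> forall i, stationary P mu gamma F i pistar.
  have diff i := HFdiff i _ _ (lam_inLam HP0 HP1 Hmu0 Hmu1 Hgamma Hpistar) Hpistar.
  split=> [[_ br] i | st]; first exact: best_response_stationary (diff i) (br i).
  by split=> // i; apply: stationary_best_response (diff i) (HA1 i _ Hpistar) HA2 (st i).
have jointE : (forall i, stationary P mu gamma F i pistar) <-> forall z, inPi z ->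
    \sum_k vfield P mu gamma F pistar k * (z k - pistar k) <= 0 :=
  unilateral_ineq Hpistar _.
have agentE i : stationary P mu gamma F i pistar <-> forall zi, inPi_i i zi ->
    \sum_x grad_i P mu gamma F i pistar x * (zi x - restr pistar i x) <= 0 :=
  unilateral_ineq_restr Hpistar _ i.
split; rewrite NashE.
- rewrite jointE; split=> [st eta eta0 | pr].
    by apply/(Proj_inPi _ Hpistar)/proj_ineq_step.
  by apply/(proj_ineq_step _ _ _ ltr01)/(Proj_inPi _ Hpistar)/pr.
- split=> [st i eta eta0 | pr i].
    by apply/(Proj_inPi_i _ Hpistar (Hpistar i))/proj_ineq_step/agentE/st.
  by apply/agentE/(proj_ineq_step _ _ _ ltr01)/(Proj_inPi_i _ Hpistar (Hpistar i))/pr.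
Qed.
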